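(* Let $R$ be a Noetherian domain of prime characteristic $p>0$, and let $S\supseteq R$ be a domain that is finitely generated as an $R$-module. If tight closure commutes with localization in $S$, then tight closure commutes with localization in $R$.
   Context: All rings are commutative and Noetherian of prime characteristic $p>0$. For an ideal $I$ of a ring $A$ and $q=p^e$, $I^{[q]}$ denotes the ideal generated by $\{x^q : x\in I\}$. The tight closure $I^*$ of $I$ is the set of $z\in A$ for which there exists $c\in A$, not in any minimal prime of $A$, with $c z^q\in I^{[q]}$ for all $q=p^e \gg 0$. We say tight closure commutes with localization in $A$ if for every ideal $I$ of $A$ and every multiplicative system $U\subseteq A$, one has $I^*A[U^{-1}] = (IA[U^{-1}])^*$, where the right side is the tight closure in the ring $A[U^{-1}]$. *)

From HB Require Import structures.
From mathcomp Require Import all_boot all_order all_algebra.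
From mathcomp Require Import fraction.
Set Implicit Arguments. Unset Strict Implicit. Unset Printing Implicit Defensive.
Import GRing.Theory.
Local Open Scope ring_scope.

(* Sets are predicates K -> Prop.  All ideal-theoretic notions are stated for
   a subring B (a predicate) of an ambient commutative ring K.  A ring A itself
   is the case K = A, B = whole (everything). *)

Definition whole (K : Type) : K -> Prop := fun _ => True.

Definition gen (K : comNzRingType) (B X : K -> Prop) (z : K) : Prop :=
  exists n (b x : 'I_n -> K),
    (forall i, B (b i) /\ X (x i)) /\ z = \sum_(i < n) b i * x i.

Definition is_ideal (K : comNzRingType) (B I : K -> Prop) : Prop :=
  (forall x, I x -> B x) /\ I 0 /\
  (forall x y, I x -> I y -> I (x + y)) /\
  (forall b x, B b -> I x -> I (b * x)).

Definition frob (K : comNzRingType) (B I : K -> Prop) (q : nat) : K -> Prop :=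
  gen B (fun y => exists x, I x /\ y = x ^+ q).

Definition is_prime (K : comNzRingType) (B P : K -> Prop) : Prop :=
  is_ideal B P /\ ~ P 1 /\
  (forall a b, B a -> B b -> P (a * b) -> P a \/ P b).

Definition minimal_prime (K : comNzRingType) (B P : K -> Prop) : Prop :=
  is_prime B P /\
  (forall Q, is_prime B Q -> (forall x, Q x -> P x) -> forall x, P x -> Q x).

Definition tight_closure (p : nat) (K : comNzRingType) (B I : K -> Prop)
    (z : K) : Prop :=
  B z /\ exists c, B c /\ (forall P, minimal_prime B P -> ~ P c) /\
    exists e0, forall e, (e0 <= e)%N -> frob B I (p ^ e) (c * z ^+ (p ^ e)).

Definition mult_system (A : comNzRingType) (U : A -> Prop) : Prop :=
  U 1 /\ (forall u v, U u -> U v -> U (u * v)).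

(* localization A[U^-1] of a domain A, realised inside its fraction field
   (for a multiplicative system U not containing 0) *)
Definition loc (A : idomainType) (U : A -> Prop) : {fraction A} -> Prop :=
  fun x => exists a u, U u /\ x = (FracField.tofrac a) / (FracField.tofrac u).

Definition fimg (A : idomainType) (X : A -> Prop) : {fraction A} -> Prop :=
  fun y => exists x, X x /\ y = FracField.tofrac x.

(* tight closure commutes with localization in the domain A:
   I^* A[U^-1] = (I A[U^-1])^*  for every ideal I and multiplicative system U *)
Definition tc_commutes_with_loc (p : nat) (A : idomainType) : Prop :=
  forall (I U : A -> Prop), is_ideal (@whole A) I -> mult_system U -> ~ U 0 ->
  forall y : {fraction A},
    gen (loc U) (fimg (tight_closure p (@whole A) I)) y <->
    tight_closure p (loc U) (gen (loc U) (fimg I)) y.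

Definition noetherian (A : comNzRingType) : Prop :=
  forall I : A -> Prop, is_ideal (@whole A) I ->
  exists n (g : 'I_n -> A),
    forall x, I x <-> gen (@whole A) (fun y => exists i, y = g i) x.

Definition module_finite (R S : comNzRingType) (f : R -> S) : Prop :=
  exists n (s : 'I_n -> S), forall x : S,
    exists r : 'I_n -> R, x = \sum_(i < n) f (r i) * s i.

(* In a domain the test elements are the nonzero elements, so tight closure persists
   along the injections R -> R_U and Frac R -> Frac S.  If y = a/t lies in (I R_U)^*,
   its image lies in (IS S_U)^* = (IS)^* S_U, and clearing denominators gives u a in
   (IS)^* for some u in U.  The contraction (IS)^* ∩ R ⊆ I^* comes from an R-linear
   phi : S -> R with phi(c) <> 0 for the test element c: applying phi to c z^q in
   (IS)^[q] puts phi(c) z^q in I^[q].  Hence y = (u a)/(u t) lies in I^* R_U. *)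

From HB Require Import structures.
From mathcomp Require Import all_boot all_order all_algebra.
From mathcomp Require Import fraction generic_quotient ring.
From Stdlib Require Import Classical IndefiniteDescription.
Import GRing.Theory.
Set Implicit Arguments. Unset Strict Implicit. Unset Printing Implicit Defensive.
Local Open Scope ring_scope.
Local Open Scope quotient_scope.

Local Notation tofrac := (@FracField.tofrac _).

Definition img (A B : Type) (f : A -> B) (X : A -> Prop) : B -> Prop :=
  fun y => exists x, X x /\ y = f x.

Definition is_subsemiring (K : comNzRingType) (B : K -> Prop) : Prop :=
  B 0 /\ B 1 /\ (forall x y, B x -> B y -> B (x + y)) /\
  (forall x y, B x -> B y -> B (x * y)).

Lemma whole_subsemiring (K : comNzRingType) : is_subsemiring (@whole K).
Proof. by []. Qed.

Lemma subsemiringX (K : comNzRingType) (B : K -> Prop) b n :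
  is_subsemiring B -> B b -> B (b ^+ n).
Proof.
move=> [_ [B1 [_ BM]]] Bb.
by elim: n => [|n IH]; rewrite ?expr0 ?exprS //; apply: BM.
Qed.

Section Generation.
Variables (K : comNzRingType) (B X : K -> Prop).

Lemma gen_ind (P : K -> Prop) :
  P 0 -> (forall x y, P x -> P y -> P (x + y)) ->
  (forall b x, B b -> X x -> P (b * x)) -> forall z, gen B X z -> P z.
Proof.
move=> P0 PD Pm z [n [b [x [H ->]]]].
by apply: (big_ind P) => // i _; case: (H i) => *; apply: Pm.
Qed.

Lemma gen0 : gen B X 0.
Proof. by exists 0%N, (fun _ => 0), (fun _ => 0); split; [case | rewrite big_ord0]. Qed.

Lemma gen1 b x : B b -> X x -> gen B X (b * x).
Proof. by move=> Bb Xx; exists 1%N, (fun _ => b), (fun _ => x); rewrite big_ord1. Qed.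

Lemma genD z1 z2 : gen B X z1 -> gen B X z2 -> gen B X (z1 + z2).
Proof.
move=> [n [b [x [H ->]]]] [m [b' [x' [H' ->]]]].
exists (n + m)%N, (fun i => match split i with inl j => b j | inr k => b' k end),
  (fun i => match split i with inl j => x j | inr k => x' k end); split.
  by move=> i; case: (split i) => j.
rewrite big_split_ord /=; congr (_ + _); apply: eq_bigr => i _.
  by rewrite -[lshift m i]/(unsplit (inl i)) unsplitK.
by rewrite -[rshift n i]/(unsplit (inr i)) unsplitK.
Qed.

Lemma genM c z :
  (forall x y, B x -> B y -> B (x * y)) -> B c -> gen B X z -> gen B X (c * z).
Proof.
move=> BM Bc [n [b [x [H ->]]]]; exists n, (fun i => c * b i), x; split.
  by move=> i; case: (H i) => ? ?; split => //; apply: BM.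
by rewrite mulr_sumr; apply: eq_bigr => i _; rewrite mulrA.
Qed.

Lemma gen_is_ideal :
  is_subsemiring B -> (forall x, X x -> B x) -> is_ideal B (gen B X).
Proof.
move=> [B0 [_ [BD BM]]] XB; split; last first.
  by split; [exact: gen0 | split => *; [apply: genD | apply: genM]].
by apply: gen_ind => // b x Bb /XB; apply: BM.
Qed.

Lemma gen_ideal_sub (J : K -> Prop) :
  is_ideal B J -> (forall x, X x -> J x) -> forall z, gen B X z -> J z.
Proof.
move=> [_ [J0 [JD JM]]] XJ; apply: gen_ind => // b x Bb Xx.
by apply/JM/XJ.
Qed.

End Generation.

Lemma gen_map (K K' : comNzRingType) (phi : {rmorphism K -> K'})
    (B X : K -> Prop) (B' X' : K' -> Prop) :
  (forall b, B b -> B' (phi b)) -> (forall x, X x -> X' (phi x)) ->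
  forall z, gen B X z -> gen B' X' (phi z).
Proof.
move=> BB' XX' z [n [b [x [H ->]]]].
exists n, (fun i => phi (b i)), (fun i => phi (x i)); split.
  by move=> i; case: (H i) => ? ?; split; [apply: BB' | apply: XX'].
by rewrite rmorph_sum; apply: eq_bigr => i _; rewrite rmorphM.
Qed.

Lemma pchar_pnat_expn (K : nzRingType) p e :
  p \in [pchar K] -> [pchar K].-nat (p ^ e)%N.
Proof. by move=> pK; rewrite pnatX (pnatE _ (pcharf_prime pK)) pK. Qed.

Lemma pchar_expn_gt0 (K : nzRingType) p e : p \in [pchar K] -> (0 < p ^ e)%N.
Proof. by move=> pK; rewrite expn_gt0 prime_gt0 // (pcharf_prime pK). Qed.

Lemma frob_gen p e (K : comNzRingType) (B X : K -> Prop) :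
  p \in [pchar K] -> is_subsemiring B ->
  forall w, frob B (gen B X) (p ^ e) w -> gen B (img (fun x => x ^+ (p ^ e)) X) w.
Proof.
move=> pK hB; have [_ [_ [_ BM]]] := hB.
set Xq := img _ X.
suff genX : forall x, gen B X x -> forall b, B b -> gen B Xq (b * x ^+ (p ^ e)).
  by apply: gen_ind => [|? ? ? ?|b _ Bb [x [Xx ->]]]; [apply: gen0|apply: genD|apply: genX].
apply: gen_ind => [b _|x y Px Py b Bb|b' x Bb' Xx b Bb].
- by rewrite expr0n eqn0Ngt (pchar_expn_gt0 e pK) mulr0; apply: gen0.
- by rewrite exprDn_pchar ?pchar_pnat_expn // mulrDr; apply: genD; [apply: Px|apply: Py].
- rewrite exprMn mulrA; apply: gen1; first by apply: BM => //; apply: subsemiringX.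
  by exists x.
Qed.

Section TightClosureIdeal.
Variables (p : nat) (K : comNzRingType) (B I : K -> Prop).
Hypotheses (pK : p \in [pchar K]) (hB : is_subsemiring B).

Lemma tight_closure_is_ideal : is_ideal B (tight_closure p B I).
Proof.
have [B0 [B1 [BD BM]]] := hB.
split; first by move=> x [].
split.
  split => //; exists 1; do 2!split => //; first by move=> P [[_ []]].
  exists 0%N => e _; rewrite expr0n eqn0Ngt (pchar_expn_gt0 e pK) mulr0.
  exact: gen0.
split.
  move=> z1 z2 [Bz1 [c1 [Bc1 [Hc1 [e1 He1]]]]] [Bz2 [c2 [Bc2 [Hc2 [e2 He2]]]]].
  split; first exact: BD.
  exists (c1 * c2); split; first exact: BM.
  split.
    move=> P HP PP; have [[_ [_ Pprime]] _] := HP.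
    by case: (Pprime _ _ Bc1 Bc2 PP); [apply: Hc1 | apply: Hc2].
  exists (maxn e1 e2) => e; rewrite geq_max => /andP [h1 h2].
  rewrite exprDn_pchar ?pchar_pnat_expn //.
  have -> : c1 * c2 * (z1 ^+ (p ^ e) + z2 ^+ (p ^ e)) =
    c2 * (c1 * z1 ^+ (p ^ e)) + c1 * (c2 * z2 ^+ (p ^ e)) by ring.
  by apply: genD; apply: genM => //; [apply: He1 | apply: He2].
move=> b z Bb [Bz [c [Bc [Hc [e0 He]]]]]; split; first exact: BM.
exists c; do 2!split => //; exists e0 => e he.
by rewrite exprMn mulrCA; apply: genM (He e he) => //; apply: subsemiringX.
Qed.

End TightClosureIdeal.

(* The only minimal prime of a domain is (0). *)
Lemma avoid_minimal_primes_iff (K : idomainType) (B : K -> Prop) c :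
  B 0 -> (forall P, minimal_prime B P -> ~ P c) <-> c != 0.
Proof.
move=> B0.
have zero_prime : is_prime B (fun x => x = 0).
  split; first split; first by move=> x ->.
    by do 2!split => //; [move=> x y -> ->; rewrite addr0 | move=> b x _ ->; rewrite mulr0].
  split; first by move=> /eqP; rewrite oner_eq0.
  by move=> a b _ _ /eqP; rewrite mulf_eq0 => /orP[] /eqP; [left|right].
split=> [Hc|c0 P [[[_ [P0 _]] _] Pmin] Pc].
  apply/eqP => c0; apply: (Hc (fun x => x = 0)) c0.
  by split=> // Q [[_ [Q0 _]] _] _ x ->.
by move: c0; rewrite (Pmin _ zero_prime (fun x x0 => eq_ind_r P P0 x0) c Pc) eqxx.
Qed.

Lemma tight_closure_map p (K K' : idomainType) (phi : {rmorphism K -> K'})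
    (B I : K -> Prop) (B' I' : K' -> Prop) :
  injective phi -> B 0 -> B' 0 ->
  (forall b, B b -> B' (phi b)) -> (forall x, I x -> I' (phi x)) ->
  forall z, tight_closure p B I z -> tight_closure p B' I' (phi z).
Proof.
move=> phi_inj B0 B'0 BB' II' z [Bz [c [Bc [Hc [e0 He]]]]].
split; first exact: BB'.
exists (phi c); split; first exact: BB'.
split.
  apply/(avoid_minimal_primes_iff _ B'0); rewrite -(rmorph0 phi) (inj_eq phi_inj).
  exact/(avoid_minimal_primes_iff _ B0).
exists e0 => e he; rewrite -rmorphXn -rmorphM.
apply: gen_map (He e he) => // _ [x [Ix ->]].
by exists (phi x); rewrite rmorphXn; split => //; apply: II'.
Qed.

Section Localization.
Variables (A : idomainType) (U : A -> Prop).
Hypotheses (hU : mult_system U) (hU0 : ~ U 0).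

Lemma mult_system_neq0 u : U u -> u != 0.
Proof. by move=> Uu; apply: contraPneq hU0 => <-. Qed.

Lemma loc_tofrac a : loc U (tofrac a).
Proof. by exists a, 1; split; [case: hU | rewrite rmorph1 divr1]. Qed.

Lemma loc_subsemiring : is_subsemiring (loc U).
Proof.
have [U1 UM] := hU.
split; first by rewrite -(rmorph0 tofrac); apply: loc_tofrac.
split; first by rewrite -(rmorph1 tofrac); apply: loc_tofrac.
split=> _ _ [a [u [Uu ->]]] [b [v [Uv ->]]].
  exists (a * v + b * u), (u * v); split; first exact: UM.
  by rewrite addf_div ?tofrac_eq0 ?mult_system_neq0 // rmorphD !rmorphM.
by exists (a * b), (u * v); split; [apply: UM | rewrite mulf_div !rmorphM].
Qed.

Lemma gen_loc_fimgP (J : A -> Prop) : is_ideal (@whole A) J ->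
  forall x, gen (loc U) (fimg J) x <-> exists w u, J w /\ U u /\ x = tofrac w / tofrac u.
Proof.
move=> [_ [J0 [JD JM]]] x; have [U1 UM] := hU; split.
  elim/gen_ind => [|_ _ [w1 [u1 [Jw1 [Uu1 ->]]]] [w2 [u2 [Jw2 [Uu2 ->]]]]|].
  - by exists 0, 1; rewrite rmorph0 mul0r.
  - exists (w1 * u2 + w2 * u1), (u1 * u2).
    split; first by apply: JD; rewrite mulrC; apply: JM.
    split; first exact: UM.
    by rewrite addf_div ?tofrac_eq0 ?mult_system_neq0 // rmorphD !rmorphM.
  move=> _ _ [a [v [Uv ->]]] [w [Jw ->]]; exists (a * w), v.
  by split; [apply: JM | split => //; rewrite mulrAC rmorphM].
move=> [w [u [Jw [Uu ->]]]]; rewrite -[_ / _]mul1r mulrA mulrC mulrA.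
apply: gen1; last by exists w.
by exists 1, u; rewrite rmorph1 mulr1 mul1r.
Qed.

Lemma tight_closure_loc_sub p (I : A -> Prop) : p \in [pchar A] ->
  forall y, gen (loc U) (fimg (tight_closure p (@whole A) I)) y ->
  tight_closure p (loc U) (gen (loc U) (fimg I)) y.
Proof.
move=> pA; have pF := rmorph_pchar tofrac pA.
have hL := loc_subsemiring; have [L0 [L1 _]] := hL.
apply: gen_ideal_sub (tight_closure_is_ideal _ pF hL) _ => _ [z [Tz ->]].
apply: tight_closure_map Tz => //.
- by move=> a b /eqP; rewrite tofrac_eq => /eqP.
- by move=> b _; apply: loc_tofrac.
by move=> x Ix; rewrite -[X in gen _ _ X]mul1r; apply: gen1 => //; exists x.
Qed.

End Localization.

Lemma img_mult_system (R S : comNzRingType) (f : {rmorphism R -> S}) (U : R -> Prop) :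
  mult_system U -> mult_system (img f U).
Proof.
move=> [U1 UM]; split; first by exists 1; rewrite rmorph1.
by move=> _ _ [u [Uu ->]] [v [Uv ->]]; exists (u * v); rewrite rmorphM; split => //; apply: UM.
Qed.

Lemma img_not0 (R S : comNzRingType) (f : {rmorphism R -> S}) (U : R -> Prop) :
  injective f -> ~ U 0 -> ~ img f U 0.
Proof.
by move=> f_inj U0 [u [Uu /esym]]; rewrite -(rmorph0 f) => /f_inj u0; rewrite u0 in Uu.
Qed.

Definition frac_map (R S : idomainType) (f : R -> S) (x : {fraction R}) : {fraction S} :=
  tofrac (f \n_(repr x)) / tofrac (f \d_(repr x)).

Lemma ratio_tofrac (R : idomainType) (r : {ratio R}) :
  \pi_{fraction R} r = tofrac \n_r / tofrac \d_r.
Proof.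
have d0 : tofrac \d_r != 0 by rewrite tofrac_eq0 denom_ratioP.
apply: (mulIf d0); rewrite mulfVK //; unlock FracField.tofrac.
rewrite -[_ * _]FracField.pi_mul; apply/eqmodP.
by rewrite /= FracField.equivfE /FracField.mulf !numden_Ratio ?mulf_neq0 ?denom_ratioP
  ?oner_neq0 // !mulr1 mulrC.
Qed.

Section FractionMap.
Variables (R S : idomainType) (f : {rmorphism R -> S}).
Hypothesis f_inj : injective f.

Lemma rmorph_neq0 r : r != 0 -> f r != 0.
Proof. by rewrite -(inj_eq f_inj) rmorph0. Qed.

Lemma frac_map_frac a d : d != 0 ->
  frac_map f (tofrac a / tofrac d) = tofrac (f a) / tofrac (f d).
Proof.
move=> d0; rewrite /frac_map; set x := tofrac a / tofrac d.
have := ratio_tofrac (repr x); rewrite reprK {1}/x.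
have := denom_ratioP (repr x); move: (\n_(repr x)) (\d_(repr x)) => n d' d'0 /eqP.
rewrite eqr_div ?tofrac_eq0 // -!rmorphM tofrac_eq => /eqP e.
by apply/eqP; rewrite eqr_div ?tofrac_eq0 ?rmorph_neq0 // -!rmorphM -e.
Qed.

Lemma frac_map_tofrac a : frac_map f (tofrac a) = tofrac (f a).
Proof. by have := frac_map_frac a (oner_neq0 R); rewrite !rmorph1 !divr1. Qed.

Lemma frac_repr (x : {fraction R}) : exists a d, d != 0 /\ x = tofrac a / tofrac d.
Proof.
exists \n_(repr x), \d_(repr x); split; first exact: denom_ratioP.
by rewrite -ratio_tofrac reprK.
Qed.

Lemma frac_map_eq_frac a t w u : t != 0 -> u != 0 ->
  frac_map f (tofrac a / tofrac t) = tofrac w / tofrac (f u) -> f (u * a) = w * f t.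
Proof.
move=> t0 u0; rewrite frac_map_frac // => /eqP.
rewrite eqr_div ?tofrac_eq0 ?rmorph_neq0 // -!rmorphM tofrac_eq => /eqP <-.
by rewrite mulrC.
Qed.

Lemma frac_mapD x y : frac_map f (x + y) = frac_map f x + frac_map f y.
Proof.
have [a [d [d0 ->]]] := frac_repr x; have [b [e [e0 ->]]] := frac_repr y.
have fd := rmorph_neq0 d0; have fe := rmorph_neq0 e0.
rewrite addf_div ?tofrac_eq0 // -!rmorphM -rmorphD !frac_map_frac ?mulf_neq0 //.
by rewrite addf_div ?tofrac_eq0 // rmorphD !rmorphM rmorphD !rmorphM.
Qed.

Lemma frac_mapN x : frac_map f (- x) = - frac_map f x.
Proof.
have [a [d [d0 ->]]] := frac_repr x.
by rewrite -mulNr -rmorphN !frac_map_frac // rmorphN rmorphN mulNr.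
Qed.

Lemma frac_map_is_zmod_morphism : zmod_morphism (frac_map f).
Proof. by move=> x y; rewrite frac_mapD frac_mapN. Qed.

Lemma frac_map_is_monoid_morphism : monoid_morphism (frac_map f).
Proof.
split; first by rewrite -(rmorph1 tofrac) frac_map_tofrac rmorph1.
move=> x y; have [a [d [d0 ->]]] := frac_repr x; have [b [e [e0 ->]]] := frac_repr y.
rewrite mulf_div -!rmorphM !frac_map_frac ?mulf_neq0 //.
by rewrite mulf_div !rmorphM.
Qed.

HB.instance Definition _ := GRing.isZmodMorphism.Build _ _ (frac_map f)
  frac_map_is_zmod_morphism.
HB.instance Definition _ := GRing.isMonoidMorphism.Build _ _ (frac_map f)
  frac_map_is_monoid_morphism.

Lemma tight_closure_frac_map p (U I : R -> Prop) : mult_system U -> ~ U 0 ->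
  forall y, tight_closure p (loc U) (gen (loc U) (fimg I)) y ->
  tight_closure p (loc (img f U)) (gen (loc (img f U)) (fimg (gen (@whole S) (img f I))))
    (frac_map f y).
Proof.
move=> hU hU0.
have loc_map x : loc U x -> loc (img f U) (frac_map f x).
  move=> [a [u [Uu ->]]]; rewrite frac_map_frac; last exact: (mult_system_neq0 hU0 Uu).
  by exists (f a), (f u); split => //; exists u.
have [L0 _] := loc_subsemiring hU hU0.
have [L'0 _] := loc_subsemiring (img_mult_system f hU) (img_not0 f_inj hU0).
apply: tight_closure_map => //; first exact: fmorph_inj.
apply: gen_map => // _ [r [Ir ->]]; exists (f r); split; last exact: frac_map_tofrac.
by rewrite -[f r]mul1r; apply: gen1 => //; exists r.
Qed.

End FractionMap.

Section FiniteExtension.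
Variables (R S : idomainType) (f : {rmorphism R -> S}).
Hypothesis f_inj : injective f.

Definition lincomb (bs : seq S) (a : nat -> R) : S := \sum_(i < size bs) f (a i) * bs`_i.

Definition lin_indep (bs : seq S) : Prop :=
  forall a, lincomb bs a = 0 -> forall i, (i < size bs)%N -> a i = 0.

Lemma lincombD bs a b : lincomb bs (fun i => a i + b i) = lincomb bs a + lincomb bs b.
Proof. by rewrite /lincomb -big_split; apply: eq_bigr => i _; rewrite rmorphD mulrDl. Qed.

Lemma lincombB bs a b : lincomb bs (fun i => a i - b i) = lincomb bs a - lincomb bs b.
Proof. by rewrite /lincomb -sumrB; apply: eq_bigr => i _; rewrite rmorphB mulrBl. Qed.

Lemma lincombN bs a : lincomb bs (fun i => - a i) = - lincomb bs a.
Proof. by rewrite /lincomb -sumrN; apply: eq_bigr => i _; rewrite rmorphN mulNr. Qed.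

Lemma lincombZ bs r a : f r * lincomb bs a = lincomb bs (fun i => r * a i).
Proof. by rewrite /lincomb mulr_sumr; apply: eq_bigr => i _; rewrite rmorphM mulrA. Qed.

Lemma lincomb_rcons bs g a :
  lincomb (rcons bs g) a = lincomb bs a + f (a (size bs)) * g.
Proof.
rewrite /lincomb size_rcons big_ord_recr /= nth_rcons ltnn eqxx; congr (_ + _).
by apply: eq_bigr => i _; rewrite nth_rcons ltn_ord.
Qed.

Lemma lincomb_delta bs i r : (i < size bs)%N ->
  lincomb bs (fun j => if j == i then r else 0) = f r * bs`_i.
Proof.
move=> lt_i; rewrite /lincomb (bigD1 (Ordinal lt_i)) //= eqxx big1 ?addr0 //.
by move=> j /negPf ji; rewrite -val_eqE /= in ji; rewrite ji rmorph0 mul0r.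
Qed.

Lemma lin_indep_coef bs a b : lin_indep bs -> lincomb bs a = lincomb bs b ->
  forall i, (i < size bs)%N -> a i = b i.
Proof.
move=> hind e i lt_i; apply/eqP; rewrite -subr_eq0; apply/eqP.
by apply: (hind (fun i => a i - b i)) => //; rewrite lincombB e subrr.
Qed.

Lemma lincomb_extend bs g a : lincomb bs a =
  lincomb (rcons bs g) (fun i => if i == size bs then 0 else a i).
Proof.
rewrite lincomb_rcons eqxx rmorph0 mul0r addr0; apply: eq_bigr => i _.
by rewrite ltn_eqF.
Qed.

(* A maximal free family through c: adjoining g either keeps the family free, or
   yields a relation whose last coefficient is nonzero by freeness of bs. *)
Lemma exists_free_family (gs : seq S) c : c != 0 ->
  exists bs D, bs`_0 = c /\ lin_indep bs /\ D != 0 /\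
    forall g, g \in gs -> exists a, f D * g = lincomb bs a.
Proof.
move=> c0; elim: gs => [|g gs [bs [D [bs0 [hind [D0 hspan]]]]]].
  exists [:: c], 1; split => //; split; last by split; [exact: oner_neq0 | by []].
  move=> a; rewrite /lincomb big_ord1 /= => /eqP; rewrite mulf_eq0 (negPf c0) orbF.
  by rewrite -(rmorph0 f) (inj_eq f_inj) => /eqP a0 [].
have size_bs : (0 < size bs)%N.
  by rewrite lt0n size_eq0; apply: contra_neq c0 => bs_nil; rewrite -bs0 bs_nil.
have [hind'|dep] := classic (lin_indep (rcons bs g)).
  exists (rcons bs g), D; split; first by rewrite nth_rcons size_bs.
  do 2!split => //.
  move=> g'; rewrite inE => /orP [/eqP -> | /hspan [a ->]].
    by exists (fun i => if i == size bs then D else 0); rewrite lincomb_delta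
      ?size_rcons // nth_rcons ltnn eqxx.
  by exists (fun i => if i == size bs then 0 else a i); apply: lincomb_extend.
have [a [ha [i [hi ai]]]] : exists a, lincomb (rcons bs g) a = 0 /\
    exists i, (i < size (rcons bs g))%N /\ a i <> 0.
  apply: NNPP => H; apply: dep => a ha i hi; apply: NNPP => ai.
  by apply: H; exists a; split => //; exists i.
rewrite lincomb_rcons in ha.
have al0 : a (size bs) != 0.
  apply: contra_notN ai => /eqP al; rewrite al rmorph0 mul0r addr0 in ha.
  move: hi; rewrite size_rcons ltnS leq_eqVlt => /orP [/eqP -> // | hi].
  exact: hind ha _ hi.
exists bs, (D * a (size bs)); do 2!split => //; split; first by rewrite mulf_neq0.
move=> g'; rewrite inE rmorphM -mulrA => /orP [/eqP -> | /hspan [b eb]].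
  exists (fun i => D * - a i); rewrite -lincombZ; congr (_ * _).
  by rewrite lincombN; apply/eqP; rewrite -addr_eq0 addrC ha.
by exists (fun i => a (size bs) * b i); rewrite mulrCA eb lincombZ.
Qed.

(* The coordinate along c in such a family, with denominators cleared by D. *)
Lemma exists_linear_functional c : module_finite f -> c != 0 ->
  exists phi : S -> R, {morph phi : s t / s + t} /\
    (forall r s, phi (f r * s) = r * phi s) /\ phi c != 0.
Proof.
move=> [n [g hg]] c0.
have [bs [D [bs0 [hind [D0 hspan]]]]] := exists_free_family (codom g) c0.
have size_bs : (0 < size bs)%N.
  by rewrite lt0n size_eq0; apply: contra_neq c0 => bs_nil; rewrite -bs0 bs_nil.
have hall s : exists a, f D * s = lincomb bs a.
  have [r ->] := hg s; rewrite mulr_sumr.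
  elim/big_ind: _ => [|_ _ [a ->] [b ->]|i _].
  - by exists (fun=> 0); rewrite /lincomb big1 // => i _; rewrite rmorph0 mul0r.
  - by exists (fun i => a i + b i); rewrite lincombD.
  - by have [a ea] := hspan _ (codom_f g i); exists (fun j => r i * a j);
      rewrite mulrCA ea lincombZ.
have [coef hcoef] := functional_choice _ hall.
exists (fun s => coef s 0%N); split; [|split].
- move=> s t; apply: (lin_indep_coef (b := fun i => coef s i + coef t i) hind) => //.
  by rewrite lincombD -!hcoef mulrDr.
- move=> r s; apply: (lin_indep_coef (b := fun i => r * coef s i) hind) => //.
  by rewrite -lincombZ -!hcoef mulrCA.
- have := lin_indep_coef (a := coef c) (b := fun i => if i == 0%N then D else 0) hind.
  by rewrite -hcoef lincomb_delta // bs0 => /(_ erefl 0%N size_bs) ->.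
Qed.

Lemma tight_closure_contraction p (I : R -> Prop) z :
  p \in [pchar R] -> module_finite f ->
  tight_closure p (@whole S) (gen (@whole S) (img f I)) (f z) ->
  tight_closure p (@whole R) I z.
Proof.
move=> pR mf [_ [c [_ [Hc [e0 He]]]]].
have pS : p \in [pchar S] := rmorph_pchar f pR.
have c0 : c != 0 by apply/(avoid_minimal_primes_iff _ (B := @whole S)).
have [phi [phiD [phiZ phic0]]] := exists_linear_functional mf c0.
have phi0 : phi 0 = 0 by rewrite -(mul0r 0) -(rmorph0 f) phiZ mul0r.
split => //; exists (phi c); do 2!split => //.
  exact/(avoid_minimal_primes_iff _ (B := @whole R)).
exists e0 => e he.
suff phi_frob : forall w, gen (@whole S) (img (fun x => x ^+ (p ^ e)) (img f I)) w ->
    frob (@whole R) I (p ^ e) (phi w).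
  by rewrite mulrC -phiZ rmorphXn mulrC; apply/phi_frob/(frob_gen pS)/He.
apply: gen_ind => [|x y|b _ _ [_ [[r [Ir ->]] ->]]].
- by rewrite phi0; apply: gen0.
- by rewrite phiD; apply: genD.
- by rewrite -rmorphXn mulrC phiZ mulrC; apply: gen1 => //; exists r.
Qed.

End FiniteExtension.

Theorem lemma2 (p : nat) (R S : idomainType) (f : {rmorphism R -> S}) :
  p \in [pchar R] ->
  noetherian R ->
  injective f ->
  module_finite f ->
  tc_commutes_with_loc p S ->
  tc_commutes_with_loc p R.
Proof.
move=> pR _ f_inj mf hS I U _ hU hU0 y.
have pS : p \in [pchar S] := rmorph_pchar f pR.
split; first exact: tight_closure_loc_sub.
move=> hy; set J := gen (@whole S) (img f I).
have hJ : is_ideal (@whole S) J by apply: gen_is_ideal.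
have tcJ := tight_closure_is_ideal J pS (whole_subsemiring S).
have [hfU hfU0] := (img_mult_system f hU, img_not0 f_inj hU0).
have := (hS J _ hJ hfU hfU0 _).2 (tight_closure_frac_map f_inj hU hU0 hy).
case/(gen_loc_fimgP hfU hfU0 tcJ) => w [_ [Tw [[u [Uu ->]] ew]]].
have [[a [t [Ut ey]]] _] := hy.
have [u0 t0] := (mult_system_neq0 hU0 Uu, mult_system_neq0 hU0 Ut).
have fua := frac_map_eq_frac f_inj t0 u0 (etrans (congr1 _ (esym ey)) ew).
apply/(gen_loc_fimgP hU hU0 (tight_closure_is_ideal I pR (whole_subsemiring R))).
exists (u * a), (u * t); split.
  apply: (tight_closure_contraction f_inj pR mf); rewrite fua mulrC.
  by have [_ [_ [_ TM]]] := tcJ; apply: TM.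
split; first by have [_ UM] := hU; apply: UM.
by rewrite ey !rmorphM -mulf_div divff ?mul1r ?tofrac_eq0.
Qed.
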